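(* Let $\Pi_1,\Pi_2$ be programs over a function-free signature $\mathcal L$. Then $\Pi_1\equiv_u\Pi_2$ if and only if for every function-free signature $\mathcal L'\supseteq\mathcal L$ and every set $A$ of ground atoms of $\mathcal L'$, the programs $\Pi_1\cup A$ and $\Pi_2\cup A$ have the same generalized answer sets.
   Context: $\mathcal L=\langle\mathcal F,\mathcal P\rangle$ is a function-free first-order signature without equality ($\mathcal F$ consists of object constants). A rule has the form $a_1\vee\dots\vee a_k\vee\neg a_{k+1}\vee\dots\vee\neg a_l\leftarrow b_1,\dots,b_m,\neg b_{m+1},\dots,\neg b_n$ with atoms possibly containing variables, $l\ge k\ge0$, $n\ge m\ge0$, $l+n>0$; a program is a set of rules. A rule is identified with the sentence $\forall\vec x(\beta_r\to\alpha_r)$ where $\vec x$ are its variables, $\alpha_r$ the disjunction of its head literals ($\bot$ if empty), $\beta_r$ the conjunction of its body literals ($\top$ if empty), $\neg p$ read as $p\to\bot$; a program is identified with the theory of its rules, and a ground atom with the corresponding fact. For a universe $\mathcal U$, $\mathcal C_{\mathcal U}=\{c_\varepsilon\}$ are fresh names and $\mathrm{At}(\mathcal P,\mathcal U)$ the atoms over $\mathcal P$ and $\mathcal C_{\mathcal U}$. A QHT-interpretation is $\langle I,J,K\rangle$ with $I$ interpreting the constants on $\mathcal U$ ($I(c_\varepsilon)=\varepsilon$) and $J\subseteq K\subseteq\mathrm{At}(\mathcal P,\mathcal U)$. Satisfaction by $M=\langle I,J,K\rangle$: $M\models p(t_1,..,t_n)$ iff $p(c_{t_1^I},..,c_{t_n^I})\in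 J$; $M\not\models\bot$; $\wedge,\vee$ componentwise; $M\models\phi\to\psi$ iff ($M\not\models\phi$ or $M\models\psi$) and $\langle I,K\rangle\models\phi\to\psi$ classically ($\langle I,K\rangle$ makes exactly $K$ true); $M\models\forall x\phi(x)$ iff $M\models\phi(c_\varepsilon)$ and $\langle I,K\rangle\models\phi(c_\varepsilon)$ for all $\varepsilon$; $M\models\exists x\phi(x)$ iff $M\models\phi(c_\varepsilon)$ for some $\varepsilon$. $\langle I,K\rangle$ (on any universe) is a generalized answer set of a program/theory $\Gamma$ iff $\langle I,K,K\rangle\models\Gamma$ and $\langle I,J,K\rangle\not\models\Gamma$ for all $J\subsetneq K$. A sentence is factual if built from atoms and $\bot$ using only $\wedge,\vee,\forall,\exists$ and implications $\phi\to\bot$. $\Pi_1\equiv_u\Pi_2$ iff for every function-free $\mathcal L'\supseteq\mathcal L$ and every factual theory $\Gamma$ over $\mathcal L'$, $\Pi_1\cup\Gamma$ and $\Pi_2\cup\Gamma$ have the same generalized answer sets. *)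

From Stdlib Require Import List Arith PeanoNat.
Import ListNotations.

Record signature := mkSig {
  Cst : Type;
  Prd : Type;
  ar  : Prd -> nat
}.

(* L' ⊇ L : an arity-preserving injective embedding of the symbols of L into L' *)
Record ext (L L' : signature) := mkExt {
  ec : Cst L -> Cst L';
  ep : Prd L -> Prd L';
  ec_inj : forall c d, ec c = ec d -> c = d;
  ep_inj : forall p q, ep p = ep q -> p = q;
  ep_ar  : forall p, ar L' (ep p) = ar L p
}.
Arguments ec {L L'} _ _.
Arguments ep {L L'} _ _.

Inductive term (L : signature) : Type :=
| TVar : nat -> term L
| TCst : Cst L -> term L.
Arguments TVar {L} _.
Arguments TCst {L} _.

Inductive form (L : signature) : Type :=
| FAtom : Prd L -> list (term L) -> form L
| FBot  : form L
| FAnd  : form L -> form L -> form L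
| FOr   : form L -> form L -> form L
| FImp  : form L -> form L -> form L
| FAll  : nat -> form L -> form L
| FEx   : nat -> form L -> form L.
Arguments FAtom {L} _ _.
Arguments FBot {L}.
Arguments FAnd {L} _ _.
Arguments FOr {L} _ _.
Arguments FImp {L} _ _.
Arguments FAll {L} _ _.
Arguments FEx {L} _ _.

Definition FNeg {L} (f : form L) : form L := FImp f FBot.
Definition FTop {L} : form L := FImp FBot FBot.

Definition term_vars {L} (t : term L) : list nat :=
  match t with TVar x => [x] | TCst _ => [] end.

Fixpoint fv {L} (f : form L) : list nat :=
  match f with
  | FAtom _ ts => flat_map term_vars ts
  | FBot => []
  | FAnd g h | FOr g h | FImp g h => fv g ++ fv h
  | FAll x g | FEx x g => remove Nat.eq_dec x (fv g)
  end.

Definition sentence {L} (f : form L) : Prop := fv f = [].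

Fixpoint wf_form {L} (f : form L) : Prop :=
  match f with
  | FAtom p ts => length ts = ar L p
  | FBot => True
  | FAnd g h | FOr g h | FImp g h => wf_form g /\ wf_form h
  | FAll _ g | FEx _ g => wf_form g
  end.

Inductive factual {L} : form L -> Prop :=
| fact_atom : forall p ts, factual (FAtom p ts)
| fact_bot  : factual FBot
| fact_and  : forall f g, factual f -> factual g -> factual (FAnd f g)
| fact_or   : forall f g, factual f -> factual g -> factual (FOr f g)
| fact_neg  : forall f, factual f -> factual (FImp f FBot)
| fact_all  : forall x f, factual f -> factual (FAll x f)
| fact_ex   : forall x f, factual f -> factual (FEx x f).

Definition theory (L : signature) := form L -> Prop.

Definition factual_theory {L} (G : theory L) : Prop :=
  forall f, G f -> factual f /\ sentence f /\ wf_form f.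

Definition union {L} (G1 G2 : theory L) : theory L := fun f => G1 f \/ G2 f.

Definition rename_term {L L'} (e : ext L L') (t : term L) : term L' :=
  match t with TVar x => TVar x | TCst c => TCst (ec e c) end.

Fixpoint rename_form {L L'} (e : ext L L') (f : form L) : form L' :=
  match f with
  | FAtom p ts => FAtom (ep e p) (map (rename_term e) ts)
  | FBot => FBot
  | FAnd g h => FAnd (rename_form e g) (rename_form e h)
  | FOr g h => FOr (rename_form e g) (rename_form e h)
  | FImp g h => FImp (rename_form e g) (rename_form e h)
  | FAll x g => FAll x (rename_form e g)
  | FEx x g => FEx x (rename_form e g)
  end.

Definition patom (L : signature) := (Prd L * list (term L))%type.
Definition patom_form {L} (a : patom L) : form L := FAtom (fst a) (snd a).

(* a1 ∨ ... ∨ ak ∨ ¬a_{k+1} ∨ ... ∨ ¬a_l ← b1,...,bm, ¬b_{m+1},...,¬b_n *)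
Record rule (L : signature) := mkRule {
  hpos : list (patom L);
  hneg : list (patom L);
  bpos : list (patom L);
  bneg : list (patom L)
}.
Arguments hpos {L} _.
Arguments hneg {L} _.
Arguments bpos {L} _.
Arguments bneg {L} _.

Fixpoint conj_list {L} (fs : list (form L)) : form L :=
  match fs with
  | [] => FTop
  | [f] => f
  | f :: fs' => FAnd f (conj_list fs')
  end.

Fixpoint disj_list {L} (fs : list (form L)) : form L :=
  match fs with
  | [] => FBot
  | [f] => f
  | f :: fs' => FOr f (disj_list fs')
  end.

Definition rule_body {L} (r : rule L) : form L :=
  conj_list (map patom_form (bpos r) ++ map (fun a => FNeg (patom_form a)) (bneg r)).
Definition rule_head {L} (r : rule L) : form L :=
  disj_list (map patom_form (hpos r) ++ map (fun a => FNeg (patom_form a)) (hneg r)).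

Definition uclose {L} (f : form L) : form L :=
  fold_right FAll f (nodup Nat.eq_dec (fv f)).

Definition rule_form {L} (r : rule L) : form L :=
  uclose (FImp (rule_body r) (rule_head r)).

Definition patom_wf {L} (a : patom L) : Prop := length (snd a) = ar L (fst a).

Definition rule_wf {L} (r : rule L) : Prop :=
  (forall a, In a (hpos r ++ hneg r ++ bpos r ++ bneg r) -> patom_wf a) /\
  length (hpos r ++ hneg r) + length (bpos r ++ bneg r) > 0.

Definition program (L : signature) := rule L -> Prop.
Definition is_program {L} (P : program L) : Prop := forall r, P r -> rule_wf r.

Definition prog_theory {L L'} (e : ext L L') (P : program L) : theory L' :=
  fun f => exists r, P r /\ f = rename_form e (rule_form r).

Definition gatom (L : signature) := (Prd L * list (Cst L))%type.
Definition gatom_form {L} (a : gatom L) : form L := FAtom (fst a) (map TCst (snd a)).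
Definition facts {L} (A : gatom L -> Prop) : theory L :=
  fun f => exists a, A a /\ f = gatom_form a.

(* At(P,U): atoms p(ε1,...,εn) over the universe U (names c_ε identified with ε) *)
Definition atom (L : signature) (U : Type) := (Prd L * list U)%type.
Definition in_At {L U} (a : atom L U) : Prop := length (snd a) = ar L (fst a).

Section Semantics.
Context {L : signature} {U : Type} (I : Cst L -> U).

Definition upd (s : nat -> U) (x : nat) (d : U) : nat -> U :=
  fun y => if Nat.eqb y x then d else s y.

Definition eval_term (s : nat -> U) (t : term L) : U :=
  match t with TVar x => s x | TCst c => I c end.

Fixpoint csat (K : atom L U -> Prop) (s : nat -> U) (f : form L) : Prop :=
  match f with
  | FAtom p ts => K (p, map (eval_term s) ts)
  | FBot => False
  | FAnd g h => csat K s g /\ csat K s h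
  | FOr g h => csat K s g \/ csat K s h
  | FImp g h => csat K s g -> csat K s h
  | FAll x g => forall d, csat K (upd s x d) g
  | FEx x g => exists d, csat K (upd s x d) g
  end.

Fixpoint qsat (J K : atom L U -> Prop) (s : nat -> U) (f : form L) : Prop :=
  match f with
  | FAtom p ts => J (p, map (eval_term s) ts)
  | FBot => False
  | FAnd g h => qsat J K s g /\ qsat J K s h
  | FOr g h => qsat J K s g \/ qsat J K s h
  | FImp g h => (~ qsat J K s g \/ qsat J K s h) /\ csat K s (FImp g h)
  | FAll x g => forall d, qsat J K (upd s x d) g /\ csat K (upd s x d) g
  | FEx x g => exists d, qsat J K (upd s x d) g
  end.

Definition qmodel (J K : atom L U -> Prop) (G : theory L) : Prop :=
  forall f s, G f -> qsat J K s f.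

Definition gas (G : theory L) (K : atom L U -> Prop) : Prop :=
  (forall a, K a -> in_At a) /\
  qmodel K K G /\
  forall J : atom L U -> Prop,
    (forall a, J a -> K a) -> (exists a, K a /\ ~ J a) -> ~ qmodel J K G.
End Semantics.

Definition same_gas {L} (G1 G2 : theory L) : Prop :=
  forall (U : Type), inhabited U ->
  forall (I : Cst L -> U) (K : atom L U -> Prop), gas I G1 K <-> gas I G2 K.

Definition uniform_equiv {L} (P1 P2 : program L) : Prop :=
  forall (L' : signature) (e : ext L L') (G : theory L'),
    factual_theory G ->
    same_gas (union (prog_theory e P1) G) (union (prog_theory e P2) G).

(* Facts are factual, so one direction is immediate.  Conversely, let K be an
   answer set of Pi1 u G on a universe U.  Adding a constant for every element
   of U makes every set J of atoms over U expressible as a set of facts, and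
   K is an answer set of Pi u J exactly when J is contained in K, K is a model
   of Pi, and no J' with J <= J' < K gives a here-and-there model of Pi.
   Taking J = K shows that K is a model of Pi2.  If some J < K made <J,K> a
   model of Pi2 u G, then K would not be an answer set of Pi2 u J, hence not
   of Pi1 u J; the witnessing J' >= J also satisfies the factual theory G,
   since factual formulas are monotone in the here-world, so K would not be
   an answer set of Pi1 u G. *)
From Stdlib Require Import List Arith.

Section HereAndThere.
Context {L : signature} {U : Type} (I : Cst L -> U).

Lemma qsat_csat (J K : atom L U -> Prop) :
  (forall a, J a -> K a) ->
  forall f s, qsat I J K s f -> csat I K s f.
Proof.
  intros HJK f; induction f; intros s H; simpl in *.
  - apply HJK, H.
  - exact H.
  - destruct H; split; auto.
  - destruct H; [left | right]; auto.
  - apply H.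
  - intro d; apply (H d).
  - destruct H as [d Hd]; exists d; auto.
Qed.

Lemma factual_qsat_mono (J J' K : atom L U -> Prop) :
  (forall a, J a -> J' a) -> (forall a, J' a -> K a) ->
  forall f, factual f -> forall s, qsat I J K s f -> qsat I J' K s f.
Proof.
  intros HJJ' HJ'K f Hf; induction Hf; intros s H; simpl in *.
  - auto.
  - exact H.
  - destruct H; split; auto.
  - destruct H; [left | right]; auto.
  - destruct H as [_ Hneg]; split; [left | exact Hneg].
    intro Hq; apply Hneg; eapply qsat_csat; eauto.
  - intro d; destruct (H d); split; auto.
  - destruct H as [d Hd]; exists d; auto.
Qed.

(* [K] is an answer set of [T] among the interpretations whose here-world
   contains [J]; this is what being an answer set of [T u J] amounts to. *)
Definition gas_above (T : theory L) (J K : atom L U -> Prop) : Prop :=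
  (forall a, K a -> in_At a) /\
  (forall a, J a -> K a) /\
  qmodel I K K T /\
  forall J' : atom L U -> Prop,
    (forall a, J a -> J' a) -> (forall a, J' a -> K a) ->
    (exists a, K a /\ ~ J' a) -> ~ qmodel I J' K T.

Lemma qmodel_union (J K : atom L U -> Prop) (T G : theory L) :
  qmodel I J K (union T G) <-> qmodel I J K T /\ qmodel I J K G.
Proof.
  split.
  - intros H; split; intros f s Hf; apply H; [left | right]; exact Hf.
  - intros [HT HG] f s [Hf | Hf]; [apply HT | apply HG]; exact Hf.
Qed.

Lemma gas_union_factual_transfer (T1 T2 G : theory L) (K : atom L U -> Prop) :
  factual_theory G ->
  (forall J, gas_above T1 J K -> gas_above T2 J K) ->
  gas I (union T1 G) K -> gas I (union T2 G) K.
Proof.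
  intros HG Htransfer [HK [HM Hmin]].
  apply qmodel_union in HM as [HT1 HGK].
  assert (Hself : gas_above T1 K K).
  { repeat split; auto.
    intros J' HKJ' _ [a [Ka nJ'a]] _; exact (nJ'a (HKJ' a Ka)). }
  destruct (Htransfer K Hself) as [_ [_ [HT2 _]]].
  split; [exact HK | split; [apply qmodel_union; auto |]].
  intros J HJK Hstrict HJ.
  apply qmodel_union in HJ as [HJT2 HJG].
  assert (Habove : gas_above T1 J K).
  { repeat split; auto.
    intros J' HJJ' HJ'K Hstrict' HJ'T1.
    apply (Hmin J' HJ'K Hstrict'), qmodel_union; split; [exact HJ'T1 |].
    intros f s Gf.
    apply (factual_qsat_mono J J' K HJJ' HJ'K f (proj1 (HG f Gf))), HJG, Gf. }
  destruct (Htransfer J Habove) as [_ [_ [_ Hmin2]]].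
  exact (Hmin2 J (fun _ h => h) HJK Hstrict HJT2).
Qed.

End HereAndThere.

Definition named_sig (L' : signature) (U : Type) : signature :=
  mkSig (Cst L' + U) (Prd L') (ar L').

Definition named_ext {L L'} (e : ext L L') (U : Type) : ext L (named_sig L' U).
Proof.
  refine (mkExt L (named_sig L' U) (fun c => inl (ec e c)) (ep e) _ _ _).
  - intros c d H; injection H; apply (ec_inj _ _ e).
  - exact (ep_inj _ _ e).
  - exact (ep_ar _ _ e).
Defined.

Definition named_interp {L' U} (I : Cst L' -> U) : Cst (named_sig L' U) -> U :=
  fun c => match c with inl c => I c | inr u => u end.

Definition named_facts {L' U} (S : atom L' U -> Prop) : gatom (named_sig L' U) -> Prop :=
  fun a => exists args, S (fst a, args) /\ snd a = map inr args.

Section NamedConstants.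
Context {L L' : signature} {U : Type} (e : ext L L') (I : Cst L' -> U).

Lemma eval_named_rename s ts :
  map (eval_term (named_interp I) s) (map (rename_term (named_ext e U)) ts) =
  map (eval_term I s) (map (rename_term e) ts).
Proof. induction ts as [| [x | c] ts IH]; simpl; f_equal; auto. Qed.

Lemma csat_named_rename (K : atom L' U -> Prop) :
  forall g s, csat (named_interp I) K s (rename_form (named_ext e U) g) <->
              csat I K s (rename_form e g).
Proof.
  induction g; intros s; simpl.
  - rewrite eval_named_rename; reflexivity.
  - tauto.
  - rewrite IHg1, IHg2; tauto.
  - rewrite IHg1, IHg2; tauto.
  - rewrite IHg1, IHg2; tauto.
  - split; intros H d; apply IHg, H.
  - split; intros [d H]; exists d; apply IHg, H.
Qed.

Lemma qsat_named_rename (J K : atom L' U -> Prop) :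
  forall g s, qsat (named_interp I) J K s (rename_form (named_ext e U) g) <->
              qsat I J K s (rename_form e g).
Proof.
  induction g; intros s; simpl.
  - rewrite eval_named_rename; reflexivity.
  - tauto.
  - rewrite IHg1, IHg2; tauto.
  - rewrite IHg1, IHg2; tauto.
  - rewrite IHg1, IHg2, (csat_named_rename K g1), (csat_named_rename K g2); tauto.
  - split; intros H d; destruct (H d) as [Hq Hc]; split;
      (apply IHg; exact Hq) || (apply csat_named_rename; exact Hc).
  - split; intros [d H]; exists d; apply IHg, H.
Qed.

Lemma qmodel_named_prog (J K : atom L' U -> Prop) (P : program L) :
  qmodel (named_interp I) J K (prog_theory (named_ext e U) P) <->
  qmodel I J K (prog_theory e P).
Proof.
  split; intros H f s [r [Pr ->]]; apply qsat_named_rename, H; exists r; auto.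
Qed.

Lemma qsat_named_atom (J K : atom L' U -> Prop) s p (args : list U) :
  qsat (named_interp I) J K s (@gatom_form (named_sig L' U) (p, map inr args)) <->
  J (p, args).
Proof.
  unfold gatom_form; simpl; rewrite !map_map.
  replace (map (fun x => eval_term (named_interp I) s (@TCst (named_sig L' U) (inr x))) args)
    with args by (induction args; simpl; f_equal; auto).
  reflexivity.
Qed.

(* The direction from left to right needs a variable assignment, hence an
   element [u] of the universe. *)
Lemma qmodel_named_facts (u : U) (J K S : atom L' U -> Prop) :
  qmodel (named_interp I) J K (facts (named_facts S)) <-> (forall a, S a -> J a).
Proof.
  split.
  - intros H [p args] Sa.
    apply (qsat_named_atom J K (fun _ => u)), H.
    exists (p, map inr args); split; [exists args; auto | reflexivity].
  - intros H f s [[p cs] [[args [Sa Hcs]] ->]]; simpl in Hcs; subst cs.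
    apply qsat_named_atom, H, Sa.
Qed.

Lemma named_facts_wf (J K : atom L' U -> Prop) :
  (forall a, K a -> in_At a) -> (forall a, J a -> K a) ->
  forall a, named_facts J a -> length (snd a) = ar (named_sig L' U) (fst a).
Proof.
  intros HK HJK [p cs] [args [Ja Hcs]]; simpl in *; subst cs.
  rewrite length_map; exact (HK _ (HJK _ Ja)).
Qed.

Lemma gas_named_facts_iff (u : U) (P : program L) (J K : atom L' U -> Prop) :
  gas (named_interp I) (union (prog_theory (named_ext e U) P) (facts (named_facts J))) K <->
  gas_above I (prog_theory e P) J K.
Proof.
  split.
  - intros [HK [HM Hmin]].
    apply qmodel_union in HM as [HP HJ].
    apply qmodel_named_prog in HP.
    pose proof (proj1 (qmodel_named_facts u K K J) HJ) as HJK.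
    repeat split; auto.
    intros J' HJJ' HJ'K Hstrict HJ'P.
    apply (Hmin J' HJ'K Hstrict), qmodel_union; split.
    + apply qmodel_named_prog, HJ'P.
    + apply (qmodel_named_facts u), HJJ'.
  - intros [HK [HJK [HP Hmin]]].
    split; [exact HK | split].
    + apply qmodel_union; split.
      * apply qmodel_named_prog, HP.
      * apply (qmodel_named_facts u), HJK.
    + intros J' HJ'K Hstrict HJ'.
      apply qmodel_union in HJ' as [HJ'P HJ'facts].
      apply qmodel_named_prog in HJ'P.
      pose proof (proj1 (qmodel_named_facts u J' K J) HJ'facts) as HJJ'.
      exact (Hmin J' HJJ' HJ'K Hstrict HJ'P).
Qed.

End NamedConstants.

Lemma facts_factual_theory {L} (A : gatom L -> Prop) :
  (forall a, A a -> length (snd a) = ar L (fst a)) -> factual_theory (facts A).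
Proof.
  intros HA f [a [Aa ->]]; split; [constructor | split].
  - unfold sentence, gatom_form; simpl; induction (snd a); simpl; auto.
  - unfold gatom_form; simpl; rewrite length_map; exact (HA a Aa).
Qed.

Definition fact_equiv {L} (P1 P2 : program L) : Prop :=
  forall (L' : signature) (e : ext L L') (A : gatom L' -> Prop),
    (forall a, A a -> length (snd a) = ar L' (fst a)) ->
    same_gas (union (prog_theory e P1) (facts A)) (union (prog_theory e P2) (facts A)).

Lemma fact_equiv_sym {L} (P1 P2 : program L) : fact_equiv P1 P2 -> fact_equiv P2 P1.
Proof. intros H L' e A HA U HU I K; symmetry; apply H; auto. Qed.

Lemma fact_equiv_gas_above {L L'} (P1 P2 : program L) (e : ext L L') {U} (u : U)
  (I : Cst L' -> U) (J K : atom L' U -> Prop) :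
  fact_equiv P1 P2 ->
  gas_above I (prog_theory e P1) J K -> gas_above I (prog_theory e P2) J K.
Proof.
  intros Heq Habove.
  pose proof Habove as [HK [HJK _]].
  apply (gas_named_facts_iff e I u),
    (Heq _ (named_ext e U) _ (named_facts_wf J K HK HJK) U (inhabits u)).
  apply (gas_named_facts_iff e I u), Habove.
Qed.

Theorem mainTheorem18 (L : signature) (P1 P2 : program L)
  (H1 : is_program P1) (H2 : is_program P2) :
  uniform_equiv P1 P2 <->
  (forall (L' : signature) (e : ext L L') (A : gatom L' -> Prop),
     (forall a, A a -> length (snd a) = ar L' (fst a)) ->
     same_gas (union (prog_theory e P1) (facts A))
              (union (prog_theory e P2) (facts A))).
Proof.
  split.
  - intros Hu L' e A HA; apply Hu, facts_factual_theory, HA.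
  - intros Hf L' e G HG U [u] I K.
    assert (Hf' : fact_equiv P2 P1) by exact (fact_equiv_sym P1 P2 Hf).
    split; apply gas_union_factual_transfer; try exact HG;
      intros J; apply (fact_equiv_gas_above _ _ e u I J K); assumption.
Qed.
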